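(* Let $p\ge 2$ be an integer which is not a prime, not twice an odd prime, not $4$ and not $9$. Then $\#_p<\lfloor p/2\rfloor$.
   Context: $\#_p$ denotes the number of squares in the ring $\mathbb Z/p\mathbb Z$, i.e. the cardinality of $\{n^2 \bmod p : n\in\mathbb Z\}$. *)

From mathcomp Require Import all_boot.
Set Implicit Arguments. Unset Strict Implicit. Unset Printing Implicit Defensive.

(* Since n^2 mod p only depends on n mod p
   (and (-n)^2 = n^2), it suffices to let n range over 0 <= n < p.
   The cardinality is the number of distinct values. *)
Definition num_squares (p : nat) : nat :=
  size (undup [seq n ^ 2 %% p | n <- iota 0 p]).

From mathcomp Require Import all_boot zify.

(* Squares modulo [p] are already attained on [0 .. p/2], since [(p - n)^2 = n^2]
   modulo [p]; so [#_p <= p/2 + 1], and every further coincidence [x^2 = y^2]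
   with [y < x <= p/2] lowers the bound by one.  Two coincidences suffice, and
   they are read off a factorisation of [p]: an odd [p = c (c + 2a)] gives
   [(c + a)^2 - a^2 = p] and [(2c + 2a)^2 - (2a)^2 = 4p]; [p = 2c (c + a)] gives
   [(2c + a)^2 - a^2 = 2p] and [(3c + 2a)^2 - (c + 2a)^2 = 4p]; [p = 4k] gives
   [(k + 1)^2 - (k - 1)^2 = p] and [(k + 2)^2 - (k - 2)^2 = 2p].  The size
   conditions [x <= p/2] fail only for [p = 4, 9, 15], and [15] is checked by
   computation. *)

Lemma size_undup_map_rem {T R : eqType} (f : T -> R) {s : seq T} {x y : T} :
  uniq s -> y \in s -> x != y -> f x = f y ->
  size (undup (map f s)) <= size (undup (map f (rem x s))).
Proof.
move=> us ys nxy fxy; apply: uniq_leq_size; first exact: undup_uniq.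
move=> v; rewrite !mem_undup => /mapP [z zs ->].
have mem_rem w : w != x -> w \in s -> w \in rem x s.
  by move=> nwx ws; rewrite (mem_rem_uniq _ us) inE /= nwx.
case: (eqVneq z x) => [-> | nzx]; last exact/map_f/mem_rem.
by rewrite fxy; apply/map_f/mem_rem; rewrite // eq_sym.
Qed.

Lemma size_undup_map_two_collisions {R : eqType} (f : nat -> R)
    {s : seq nat} {x1 y1 x2 y2 : nat} :
  uniq s -> all (mem s) [:: x1; y1; x2; y2] ->
  y1 < x1 -> y2 < x2 -> f x1 = f y1 -> f x2 = f y2 -> (x1, y1) != (x2, y2) ->
  size (undup (map f s)) <= (size s).-2.
Proof.
move=> us /and5P[x1s y1s x2s y2s _].
wlog le_x12 : x1 y1 x2 y2 x1s y1s x2s y2s / x1 <= x2.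
  move=> wlog_le l1 l2 f1 f2 n12; case: (leqP x1 x2) => [le12 | /ltnW le21].
    exact: (wlog_le x1 y1 x2 y2).
  by apply: (wlog_le x2 y2 x1 y1); rewrite // eq_sym.
move=> l1 l2 f1 f2 n12.
have in_rem a b : a \in s -> a != b -> a \in rem b s.
  by move=> ab nab; rewrite (mem_rem_uniq _ us) inE /= nab.
(* Remove [x2] (its partner [y2] stays), then a second collision inside [rem x2 s]. *)
suff [a [b [ars brs nab fab]]] : exists a b,
    [/\ a \in rem x2 s, b \in rem x2 s, a != b & f a = f b].
  have le_size := size_undup (map f (rem a (rem x2 s))).
  rewrite size_map !size_rem // in le_size.
  have x2_rem := size_undup_map_rem f us y2s (negbT (gtn_eqF l2)) f2.
  have a_rem := size_undup_map_rem f (rem_uniq x2 us) brs nab fab.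
  exact: leq_trans x2_rem (leq_trans a_rem le_size).
case: (ltngtP x1 x2) le_x12 => // [lt12 | eq12] _.
  exists x1, y1; split; rewrite ?gtn_eqF //; apply: in_rem; rewrite // ltn_eqF //.
  exact: ltn_trans lt12.
subst x2; exists y1, y2; split; rewrite -?f1 //; try by apply: in_rem; rewrite // ltn_eqF.
by apply: contraNneq n12 => ->.
Qed.

Lemma sqr_subn_eqmod p n : n <= p -> (p - n) ^ 2 = n ^ 2 %[mod p].
Proof.
move=> le_np; rewrite -(modnMDl (2 * n)) -[in RHS](modnMDl p).
by congr (_ %% p); nia.
Qed.

Lemma num_squares_le_half_range p :
  num_squares p <= size (undup [seq n ^ 2 %% p | n <- iota 0 (p./2).+1]).
Proof.
apply: uniq_leq_size; first exact: undup_uniq.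
move=> w; rewrite !mem_undup => /mapP [n]; rewrite mem_iota add0n => lt_np ->.
case: (leqP n p./2) => le_nh.
  by apply/mapP; exists n; rewrite // mem_iota ltnS.
apply/mapP; exists (p - n); last by rewrite sqr_subn_eqmod // ltnW.
rewrite mem_iota add0n ltnS; lia.
Qed.

Lemma num_squares_lt_half_of_collisions p x1 y1 x2 y2 :
  y1 < x1 <= p./2 -> y2 < x2 <= p./2 ->
  x1 ^ 2 = y1 ^ 2 %[mod p] -> x2 ^ 2 = y2 ^ 2 %[mod p] -> (x1, y1) != (x2, y2) ->
  num_squares p < p./2.
Proof.
move=> /andP[l1 h1] /andP[l2 h2] e1 e2 n12.
apply: leq_ltn_trans (num_squares_le_half_range p) _.
have in_range x : x <= p./2 -> x \in iota 0 (p./2).+1 by rewrite mem_iota.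
have in_range_all : all (mem (iota 0 (p./2).+1)) [:: x1; y1; x2; y2].
  by rewrite /= !in_range // ltnW // ?(leq_trans l1 h1) ?(leq_trans l2 h2).
have := size_undup_map_two_collisions (fun n => n ^ 2 %% p) (iota_uniq 0 _)
  in_range_all l1 l2 e1 e2 n12.
rewrite size_iota => le_size; apply: leq_ltn_trans le_size _.
by case: (p./2) h1 l1 => [|[|h]]; rewrite ?leqn0 => // /eqP->.
Qed.

Lemma eqmod_of_eq_addMl k p x y : x = k * p + y -> x = y %[mod p].
Proof. by move->; rewrite modnMDl. Qed.

Lemma num_squares_lt_half_4k k : 1 < k -> num_squares (4 * k) < (4 * k)./2.
Proof.
case: k => [|[|k]] // _; have half_p : (4 * k.+2)./2 = 2 * k.+2 by lia.
apply: (@num_squares_lt_half_of_collisions _ (k + 3) (k + 1) (k + 4) k).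
- by rewrite half_p; lia.
- by rewrite half_p; lia.
- by apply: (@eqmod_of_eq_addMl 1); nia.
- by apply: (@eqmod_of_eq_addMl 2); nia.
- by rewrite xpair_eqE eqn_add2l.
Qed.

Lemma num_squares_lt_half_odd_factors c a : 0 < c ->
  4 * (c + a) <= c * (c + a.*2) -> num_squares (c * (c + a.*2)) < (c * (c + a.*2))./2.
Proof.
move=> gt0c le_cp; set p := c * _.
have le_half x : 2 * x <= p -> x <= p./2 by lia.
apply: (@num_squares_lt_half_of_collisions _ (c + a) a (2 * c + 2 * a) (2 * a)).
- by rewrite le_half; lia.
- by rewrite le_half; lia.
- by apply: (@eqmod_of_eq_addMl 1); rewrite /p; nia.
- by apply: (@eqmod_of_eq_addMl 4); rewrite /p; nia.
- by rewrite xpair_eqE; apply/nandP; left; apply/eqP; lia.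
Qed.

Lemma num_squares_lt_half_twice_factors c a : 0 < c ->
  3 * c + 2 * a <= c * (c + a) ->
  num_squares (2 * c * (c + a)) < (2 * c * (c + a))./2.
Proof.
move=> gt0c le_cp; set p := 2 * c * _.
have le_half x : 2 * x <= p -> x <= p./2 by lia.
apply: (@num_squares_lt_half_of_collisions _ (2 * c + a) a (3 * c + 2 * a) (c + 2 * a)).
- by rewrite le_half // /p; nia.
- by rewrite le_half // /p; nia.
- by apply: (@eqmod_of_eq_addMl 2); rewrite /p; nia.
- by apply: (@eqmod_of_eq_addMl 4); rewrite /p; nia.
- by rewrite xpair_eqE; apply/nandP; left; apply/eqP; lia.
Qed.

Lemma composite_factors {n : nat} : 1 < n -> ~~ prime n ->
  exists c d, [/\ n = c * d, 1 < c & c <= d].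
Proof.
move=> gt1n /primePns[|[c [prime_c le_c2n /dvdnP[d def_n]]]]; first by rewrite ltnNge gt1n.
exists c, d; split; rewrite ?prime_gt1 // 1?mulnC //.
by move: le_c2n; rewrite def_n -mulnn leq_pmul2r // prime_gt0.
Qed.

Lemma num_squares_lt_half_odd p : odd p -> 1 < p -> ~~ prime p ->
  p != 9 -> p != 15 -> num_squares p < p./2.
Proof.
move=> odd_p gt1p np p9 p15.
have [c [d [def_p gt1c le_cd]]] := composite_factors gt1p np.
have /andP[odd_c odd_d] : odd c && odd d by rewrite -oddM -def_p.
have [a def_d] : exists a, d = c + a.*2.
  by exists (d - c)./2; rewrite halfK oddB // odd_c odd_d /=; lia.
have ge3c : 2 < c by case: c gt1c odd_c {def_p le_cd def_d} => [|[|[|]]].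
rewrite def_p def_d in p9 p15 *; apply: num_squares_lt_half_odd_factors; first lia.
have [eq3c | gt3c] : c = 3 \/ 3 < c by lia.
  by move: p9 p15; rewrite eq3c; case: a {def_d} => [|[|a]] //; lia.
by clear -gt3c; nia.
Qed.

Lemma num_squares_lt_half_twice_odd m : odd m -> 1 < m -> ~~ prime m ->
  num_squares (2 * m) < (2 * m)./2.
Proof.
move=> odd_m gt1m nm.
have [c [d [def_m gt1c le_cd]]] := composite_factors gt1m nm.
have /andP[odd_c _] : odd c && odd d by rewrite -oddM -def_m.
have ge3c : 2 < c by case: c gt1c odd_c {def_m le_cd} => [|[|[|]]].
rewrite def_m -(subnKC le_cd) mulnA.
by apply: num_squares_lt_half_twice_factors; clear -ge3c; nia.
Qed.

Theorem lemma4 (p : nat) :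
  2 <= p -> ~~ prime p -> ~ (exists q, prime q /\ odd q /\ p = 2 * q) ->
  p <> 4 -> p <> 9 ->
  num_squares p < p./2.
Proof.
move=> ge2p np not_twice_prime p4 p9.
case: (boolP (odd p)) => [odd_p | even_p].
  have [-> // | p15] := eqVneq p 15.
  by apply: num_squares_lt_half_odd => //; apply/eqP.
case: (boolP (4 %| p)) => [/dvdnP [k def_p] | n4p].
  by rewrite def_p mulnC; apply: num_squares_lt_half_4k; lia.
have [m def_p] : exists m, p = 2 * m.
  by exists p./2; rewrite mul2n -[in LHS](odd_double_half p) (negbTE even_p).
have odd_m : odd m.
  apply: contraR n4p => even_m; rewrite def_p -(odd_double_half m) (negbTE even_m).
  by rewrite add0n -mul2n mulnA dvdn_mulr.
have gt1m : 1 < m by move: np; rewrite def_p; case: m odd_m {def_p} => [|[|]].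
rewrite def_p; apply: num_squares_lt_half_twice_odd => //.
by apply: contra_notN not_twice_prime => prime_m; exists m.
Qed.
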